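(* Let $G=(\mathcal{V},\mathcal{C})$, and let $G^M_0=(\mathcal{V}^M_0,\mathcal{E}^M_0)$ with $\mathcal{V}^M_0=\{v: v\subseteq c\text{ for some }c\in\mathcal{C}\}$ and $\mathcal{E}^M_0=\{(c\to s): c,s\in\mathcal{V}^M_0,\ s\subsetneq c\}$. Let $\mathcal{C}_m=\{c\in\mathcal{C}:\ \text{there is no }\hat c\in\mathcal{C}\text{ with }c\subsetneq\hat c\}$ be the set of maximal clusters and $\mathcal{I}_m=\{c\cap c': c,c'\in\mathcal{C}_m\}$. Then every $v\in\mathcal{V}^M_0\setminus(\mathcal{C}\cup\mathcal{I}_m)$ is a redundant node w.r.t. $G^M_0$.
   Context: $\mathcal{V}=\{1,\dots,n\}$, each $x_i$ ranges over a finite set, $\mathbf{x}_s=(x_i)_{i\in s}$; $\mathcal{C}$ is a collection of subsets of $\mathcal{V}$. A marginal polytope diagram of $G=(\mathcal{V},\mathcal{C})$ is a pair $G^M=(\mathcal{V}^M,\mathcal{E}^M)$ with $\mathcal{C}\subseteq\mathcal{V}^M\subseteq 2^{\mathcal{V}}$ and $\mathcal{E}^M$ a set of directed edges $(c\to s)$ with $c,s\in\mathcal{V}^M$, $s\subseteq c$ ($G^M_0$ is one). For a set $E$ of pairs $(c\to s)$ with $s\subseteq c$, let $P(E)$ be the set of families $\boldsymbol\mu=(\mu_c)_{c\in\mathcal{C}}$ of real functions $\mu_c(\mathbf{x}_c)$ for which there exist real functions $\mu_w(\mathbf{x}_w)$ for all other subsets $w\subseteq\mathcal{V}$ with $\sum_{\mathbf{x}_{c\setminus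 s}}\mu_c(\mathbf{x}_c)=\mu_s(\mathbf{x}_s)$ for all $(c\to s)\in E$, $\mathbf{x}_s$. A node $v\in\mathcal{V}^M\setminus\mathcal{C}$ is redundant w.r.t. $G^M$ if $P(\mathcal{E}^M)=P(\hat{\mathcal{E}}^M)$, where $\hat{\mathcal{E}}^M=\big[\mathcal{E}^M\setminus(\{(c\to v)\in\mathcal{E}^M\}\cup\{(v\to s)\in\mathcal{E}^M\})\big]\cup\{(c\to s):(c\to v)\in\mathcal{E}^M,(v\to s)\in\mathcal{E}^M\}$. *)

From HB Require Import structures.
From mathcomp Require Import all_boot all_order all_algebra.
From mathcomp Require Import reals.
Set Implicit Arguments. Unset Strict Implicit. Unset Printing Implicit Defensive.
Import Order.TTheory GRing.Theory Num.Theory.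
Local Open Scope ring_scope.

(* Variables are 'I_n (= {1,...,n} shifted); variable i ranges over the
   finite set D i.  A full configuration assigns a value to each variable. *)
Definition conf (n : nat) (D : 'I_n -> finType) :=
  {dffun forall i : 'I_n, D i}.

(* A "real function of x_s" is encoded as a function of full configurations
   that only depends on the coordinates in s. *)
Definition local (R : realType) (n : nat) (D : 'I_n -> finType)
  (s : {set 'I_n}) (f : conf D -> R) : Prop :=
  forall x y : conf D, (forall i, i \in s -> x i = y i) -> f x = f y.

(* Marginalisation constraint for an edge (c -> s):
   sum_{x_{c\s}} mu_c(x_c) = mu_s(x_s) for all x_s. *)
Definition marg_ok (R : realType) (n : nat) (D : 'I_n -> finType)
  (nu : {set 'I_n} -> conf D -> R) (c s : {set 'I_n}) : Prop :=
  forall x : conf D,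
    \sum_(y : conf D | [forall i, (i \notin c :\: s) ==> (y i == x i)]) nu c y
    = nu s x.

Definition inP (R : realType) (n : nat) (D : 'I_n -> finType)
  (C : {set {set 'I_n}}) (E : {set {set 'I_n} * {set 'I_n}})
  (mu : {set 'I_n} -> conf D -> R) : Prop :=
  (forall c, c \in C -> local c (mu c)) /\
  exists nu : {set 'I_n} -> conf D -> R,
    (forall w, local w (nu w)) /\
    (forall c, c \in C -> nu c = mu c) /\
    (forall e, e \in E -> marg_ok nu e.1 e.2).

Definition hatE (n : nat) (E : {set {set 'I_n} * {set 'I_n}}) (v : {set 'I_n})
  : {set {set 'I_n} * {set 'I_n}} :=
  [set e in E | (e.2 != v) && (e.1 != v)] :|:
  [set (e1.1, e2.2) | e1 in E, e2 in E & (e1.2 == v) && (e2.1 == v)].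

Definition redundant (R : realType) (n : nat) (D : 'I_n -> finType)
  (C : {set {set 'I_n}}) (VM : {set {set 'I_n}})
  (E : {set {set 'I_n} * {set 'I_n}}) (v : {set 'I_n}) : Prop :=
  v \in VM :\: C /\
  forall mu : {set 'I_n} -> conf D -> R, inP C E mu <-> inP C (hatE E v) mu.

Definition V0 (n : nat) (C : {set {set 'I_n}}) : {set {set 'I_n}} :=
  [set v : {set 'I_n} | [exists c in C, v \subset c]].

Definition E0 (n : nat) (C : {set {set 'I_n}}) : {set {set 'I_n} * {set 'I_n}} :=
  [set e | [&& e.1 \in V0 C, e.2 \in V0 C & e.2 \proper e.1]].

Definition Cmax (n : nat) (C : {set {set 'I_n}}) : {set {set 'I_n}} :=
  [set c in C | ~~ [exists c' in C, c \proper c']].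

Definition Imax (n : nat) (C : {set {set 'I_n}}) : {set {set 'I_n}} :=
  [set c :&: c' | c in Cmax C, c' in Cmax C].

From mathcomp Require Import all_boot all_algebra.
From mathcomp Require Import reals.
Set Implicit Arguments. Unset Strict Implicit. Unset Printing Implicit Defensive.
Local Open Scope ring_scope.

(* A solution of the full diagram solves the reduced one because each shortcut
   edge c -> s replacing c -> v -> s follows from transitivity of
   marginalisation.  Conversely, for a solution of the reduced diagram the
   marginal onto v is the same from every node a strictly containing v: a lies
   in a maximal cluster c, two such clusters c, c' meet in c :&: c', which
   strictly contains v because v is not such an intersection, and the edges
   a -> c -> c :&: c' <- c' <- b avoid v.  Taking this common marginal as the
   value at v restores the edges into v, and the shortcut edges c -> v -> s
   give those out of v. *)

Section Marginals.

Variables (n : nat) (D : 'I_n -> finType).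

Definition agree_off (A : {set 'I_n}) (x y : conf D) : bool :=
  [forall i, (i \notin A) ==> (y i == x i)].

Lemma agree_offP (A : {set 'I_n}) (x y : conf D) :
  reflect (forall i, i \notin A -> y i = x i) (agree_off A x y).
Proof.
apply: (iffP forallP) => [xy i iA | xy i]; first by apply/eqP/(implyP (xy i)).
by apply/implyP => iA; apply/eqP/xy.
Qed.

Definition glue (A : {set 'I_n}) (y x : conf D) : conf D :=
  [ffun i => if i \in A then y i else x i].

Lemma agree_off_glue (A B : {set 'I_n}) (x y z : conf D) :
  [disjoint A & B] -> agree_off A x z ->
  agree_off (A :|: B) x y && (glue A y x == z) = agree_off B z y.
Proof.
move=> dAB /agree_offP xz; apply/idP/idP.
  case/andP => /agree_offP xy /eqP <-; apply/agree_offP => i iB.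
  by rewrite ffunE; case: ifP => // iA; apply: xy; rewrite inE iA (negbTE iB).
move=> /agree_offP zy; apply/andP; split.
  by apply/agree_offP => i; rewrite inE negb_or => /andP [iA iB]; rewrite zy ?xz.
apply/eqP/ffunP => i; rewrite ffunE; case: ifPn => iA; last by rewrite xz.
by rewrite zy // (disjointFr dAB iA).
Qed.

Variable R : realType.

Definition marg (c s : {set 'I_n}) (f : conf D -> R) (x : conf D) : R :=
  \sum_(y | agree_off (c :\: s) x y) f y.

Lemma marg_okE (nu : {set 'I_n} -> conf D -> R) (c s : {set 'I_n}) :
  marg_ok nu c s = (marg c s (nu c) =1 nu s).
Proof. by []. Qed.

Lemma eq_marg (c s : {set 'I_n}) (f g : conf D -> R) :
  f =1 g -> marg c s f =1 marg c s g.
Proof. by move=> fg x; apply: eq_bigr. Qed.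

Lemma marg_comp (c v s : {set 'I_n}) (f : conf D -> R) :
  s \subset v -> v \subset c -> marg c s f =1 marg v s (marg c v f).
Proof.
move=> sv vc x; rewrite /marg.
have dvc : [disjoint v :\: s & c :\: v].
  rewrite -setI_eq0; apply/eqP/setP => i; rewrite !inE.
  by case: (i \in v); rewrite /= ?andbF.
have -> : c :\: s = (v :\: s) :|: (c :\: v).
  apply/setP => i; rewrite !inE.
  case: (boolP (i \in v)) => iv; first by rewrite (subsetP vc) //= andbT orbF.
  by rewrite /= andbF (contraNN (subsetP sv i) iv).
rewrite (partition_big (glue (v :\: s) ^~ x) (agree_off (v :\: s) x)).
  by apply: eq_bigr => z xz; apply: eq_bigl => y; rewrite agree_off_glue.
by move=> y _; apply/agree_offP => i /negbTE iA; rewrite ffunE iA.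
Qed.

Lemma local_marg (c s : {set 'I_n}) (f : conf D -> R) :
  local c f -> local s (marg c s f).
Proof.
move=> fc x x' xx'.
rewrite /marg (reindex_onto (glue (c :\: s) ^~ x) (glue (c :\: s) ^~ x')); last first.
  move=> y /agree_offP xy; apply/ffunP => i; rewrite !ffunE.
  by case: ifPn => [-> | /xy ->].
have glue_agree y : agree_off (c :\: s) x (glue (c :\: s) y x)
      && (glue (c :\: s) (glue (c :\: s) y x) x' == y) = agree_off (c :\: s) x' y.
  apply/andP/agree_offP => [[_ /eqP <-] i /negbTE iA | x'y]; first by rewrite ffunE iA.
  split; first by apply/agree_offP => i /negbTE iA; rewrite ffunE iA.
  by apply/eqP/ffunP => i; rewrite !ffunE; case: ifPn => [-> | /x'y ->].
apply: eq_big => [y | y]; first exact: glue_agree.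
rewrite glue_agree => /agree_offP x'y; apply: fc => i ic; rewrite ffunE.
case: ifPn => // iA; rewrite x'y // -xx' //.
by move: iA; rewrite inE ic andbT negbK.
Qed.

End Marginals.

Section Diagrams.

Variable n : nat.
Implicit Types (v c s : {set 'I_n}) (C : {set {set 'I_n}})
  (E : {set {set 'I_n} * {set 'I_n}}).

Lemma V0P C v : reflect (exists2 c, c \in C & v \subset c) (v \in V0 C).
Proof. by rewrite inE; apply: (iffP exists_inP) => [[c] | [c]]; exists c. Qed.

Lemma mem_V0 C c : c \in C -> c \in V0 C.
Proof. by move=> cC; apply/V0P; exists c. Qed.

Lemma mem_E0 C a b : a \in V0 C -> b \in V0 C -> b \proper a -> (a, b) \in E0 C.
Proof. by move=> aV bV ba; rewrite inE aV bV ba. Qed.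

Lemma E0_proper C e : e \in E0 C -> e.2 \proper e.1.
Proof. by rewrite inE => /and3P []. Qed.

Lemma Cmax_sub C : {subset Cmax C <= C}.
Proof. by move=> c; rewrite inE => /andP []. Qed.

Lemma Cmax_above C c : c \in C -> exists2 c', c' \in Cmax C & c \subset c'.
Proof.
move=> cC; pose above d := (d \in C) && (c \subset d).
have [|c' /maxsetP [/andP [c'C cc'] c'_max]] := @ex_maxset _ above.
  by exists c; rewrite /above cC subxx.
exists c' => //; rewrite inE c'C; apply/exists_inP => -[d dC c'd].
have c'_d := proper_sub c'd.
have dc' : d = c' by apply: (c'_max d _ c'_d); rewrite /above dC (subset_trans cc').
by move: c'd; rewrite dc' properxx.
Qed.

Lemma hatE_keep E v e : e \in E -> e.1 != v -> e.2 != v -> e \in hatE E v.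
Proof. by move=> eE e1v e2v; rewrite !inE eE e1v e2v. Qed.

Lemma hatE_shortcut E v c s : (c, v) \in E -> (v, s) \in E -> (c, s) \in hatE E v.
Proof.
move=> cv vs; apply/setUP; right; apply/imset2P.
by exists (c, v) (v, s); rewrite ?inE ?vs ?eqxx.
Qed.

Variables (D : 'I_n -> finType) (R : realType).

Lemma inP_hatE C E v (mu : {set 'I_n} -> conf D -> R) :
  (forall e, e \in E -> e.2 \subset e.1) -> inP C E mu -> inP C (hatE E v) mu.
Proof.
move=> Esub [mu_loc [nu [nu_loc [nu_mu nuE]]]]; split=> //; exists nu.
do 2!split=> //; move=> e /setUP [|/imset2P [[c v1] [v2 s] cvE]].
  by rewrite inE => /andP [/nuE].
rewrite inE => /andP [vsE /andP [/= /eqP v1v /eqP v2v]] ->; subst v1 v2.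
have [sv vc] := (Esub _ vsE, Esub _ cvE).
rewrite marg_okE => x /=; rewrite (marg_comp _ sv vc).
by rewrite -(nuE _ vsE); apply: eq_marg; exact: (nuE _ cvE).
Qed.

End Diagrams.

Section RedundantNode.

Variables (n : nat) (D : 'I_n -> finType) (R : realType).
Variables (C : {set {set 'I_n}}) (v : {set 'I_n}).
Hypothesis vNI : v \notin Imax C.

Section ReducedSolution.

Variable nu : {set 'I_n} -> conf D -> R.
Hypothesis nu_hatE : forall e, e \in hatE (E0 C) v -> marg_ok nu e.1 e.2.

Lemma marg_onto_mono a b : a \in V0 C -> b \in V0 C -> v \proper a -> a \subset b ->
  marg a v (nu a) =1 marg b v (nu b).
Proof.
move=> aV bV va ab; have [-> // | neq_ab] := eqVneq a b.
have ba : a \proper b by rewrite properEneq neq_ab.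
have av : a != v by rewrite eq_sym proper_neq.
have bv : b != v by rewrite eq_sym proper_neq // (proper_sub_trans va ab).
have := nu_hatE (hatE_keep (mem_E0 bV aV ba) bv av).
rewrite marg_okE => /= nu_ba x.
rewrite [RHS](marg_comp _ (proper_sub va) ab).
by apply: eq_marg => y; rewrite nu_ba.
Qed.

Lemma marg_onto_const a b : a \in V0 C -> b \in V0 C -> v \proper a -> v \proper b ->
  marg a v (nu a) =1 marg b v (nu b).
Proof.
move=> aV bV va vb.
have /V0P [ca /Cmax_above [ma maM cama] aca] := aV.
have /V0P [cb /Cmax_above [mb mbM cbmb] bcb] := bV.
have [ama bmb] := (subset_trans aca cama, subset_trans bcb cbmb).
have [maV mbV] := (mem_V0 (Cmax_sub maM), mem_V0 (Cmax_sub mbM)).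
have IV : ma :&: mb \in V0 C.
  by apply/V0P; exists ma; [exact: Cmax_sub | exact: subsetIl].
have vI : v \proper ma :&: mb.
  rewrite properEneq subsetI (subset_trans (proper_sub va) ama).
  rewrite (subset_trans (proper_sub vb) bmb) !andbT.
  by apply: contraNneq vNI => ->; apply/imset2P; exists ma mb.
move=> x; rewrite (marg_onto_mono aV maV va ama).
rewrite -(marg_onto_mono IV maV vI (subsetIl _ _)).
by rewrite (marg_onto_mono IV mbV vI (subsetIr _ _)) (marg_onto_mono bV mbV vb bmb).
Qed.

Lemma marg_ok_extend c0 : c0 \in C -> v \proper c0 ->
  forall e, e \in E0 C ->
  marg_ok (fun w => if w == v then marg c0 v (nu c0) else nu w) e.1 e.2.
Proof.
move=> c0C vc0 [a b] abE; have c0V := mem_V0 c0C.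
move: (abE); rewrite inE => /and3P [/= aV bV ba]; rewrite marg_okE /= => x.
have [av | av] := eqVneq a v; have [bv | bv] := eqVneq b v.
- by move: ba; rewrite av bv properxx.
- subst a; rewrite -(marg_comp _ (proper_sub ba) (proper_sub vc0)).
  exact: nu_hatE (hatE_shortcut (mem_E0 c0V aV vc0) abE) x.
- by subst b; apply: marg_onto_const.
- exact: nu_hatE (hatE_keep abE av bv) x.
Qed.

End ReducedSolution.

Lemma inP_E0_of_hatE (mu : {set 'I_n} -> conf D -> R) :
  v \in V0 C -> v \notin C -> inP C (hatE (E0 C) v) mu -> inP C (E0 C) mu.
Proof.
move=> /V0P [c0 c0C vc0] vNC [mu_loc [nu [nu_loc [nu_mu nuE]]]]; split=> //.
have v_c0 : v \proper c0.
  by rewrite properEneq vc0 andbT; apply: contraNneq vNC => ->.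
exists (fun w => if w == v then marg c0 v (nu c0) else nu w); do ![split].
- by move=> w; case: eqP => [-> | _]; [apply: local_marg | apply: nu_loc].
- move=> c cC; have /negbTE -> : c != v by apply: contraNneq vNC => <-.
  exact: nu_mu.
- exact: marg_ok_extend.
Qed.

End RedundantNode.

Theorem proposition11 (R : realType) (n : nat) (D : 'I_n -> finType)
  (C : {set {set 'I_n}}) (v : {set 'I_n}) :
  v \in V0 C :\: (C :|: Imax C) ->
  redundant R D C (V0 C) (E0 C) v.
Proof.
rewrite in_setD in_setU negb_or => /andP [/andP [vNC vNI] vV].
split=> [|mu]; first by rewrite in_setD vNC vV.
split; first by apply: inP_hatE => e /E0_proper /proper_sub.
exact: inP_E0_of_hatE.
Qed.
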